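(* Let $G$ be a finite connected graph with maximum degree at most $\Delta$, where $\Delta\ge2$, and with diameter $D=\mathrm{diam}(G)\ge2$ in the hop metric. Then, under geodesic routing, every vertex $v$ of $G$ satisfies $$T(v)\le \Delta^2(\Delta-1)^{D-2}D^2.$$
   Context: Geodesic routing and vertex flow on a finite connected graph $G$: $d$ denotes the hop (graph) metric; for each unordered pair of distinct vertices $\{v,w\}$ one unit of flow is sent from $v$ to $w$ along shortest paths, where at each vertex $v'$ on a shortest path the flow arriving at $v'$ is split equally among the neighbors $x$ of $v'$ with $d(x,w)=d(v',w)-1$. The vertex flow $T(u)$ of a vertex $u$ is the total flow (over all pairs, including pairs having $u$ as an endpoint) passing through $u$. *)

From HB Require Import structures.
From mathcomp Require Import all_boot all_order all_algebra.
Set Implicit Arguments. Unset Strict Implicit. Unset Printing Implicit Defensive.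
Import Order.TTheory GRing.Theory Num.Theory.

(* A finite simple graph: vertex type T : finType, adjacency e : rel T,
   assumed symmetric and irreflexive in the theorem. *)

Fixpoint reach (T : finType) (e : rel T) (n : nat) (x : T) : {set T} :=
  match n with
  | 0 => [set x]
  | n'.+1 => reach e n' x :|: [set y | [exists z in reach e n' x, e z y]]
  end.

(* Hop distance: least n with y within n steps of x.  In a connected graph
   this is < #|T|, so the search bound is harmless. *)
Definition dist (T : finType) (e : rel T) (x y : T) : nat :=
  find (fun n => y \in reach e n x) (iota 0 #|T|).

Definition diam (T : finType) (e : rel T) : nat :=
  \max_(x : T) \max_(y : T) dist e x y.

Definition deg (T : finType) (e : rel T) (x : T) : nat := #|[set y | e x y]|.

Local Open Scope ring_scope.

Definition downdeg (T : finType) (e : rel T) (w p : T) : nat :=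
  #|[set x | e p x && ((dist e x w).+1 == dist e p w)%N]|.

Definition step (T : finType) (e : rel T) (w : T) (phi : T -> rat) : T -> rat :=
  fun x => \sum_(p : T | e p x && ((dist e x w).+1 == dist e p w)%N)
             phi p / (downdeg e w p)%:R.

Definition phi (T : finType) (e : rel T) (v w : T) (k : nat) : T -> rat :=
  iter k (step e w) (fun x => (x == v)%:R).

(* Total flow of the v->w unit that passes through u (including endpoints).
   After d(v,w) steps all flow sits at w, which forwards nothing. *)
Definition flow (T : finType) (e : rel T) (v w u : T) : rat :=
  \sum_(k < #|T|) phi e v w k u.

(* Vertex flow T(u): sum over unordered pairs {v,w}, each pair routed in the
   direction chosen by the orientation o (o v w means "send from v to w"). *)
Definition vflow (T : finType) (e : rel T) (o : rel T) (u : T) : rat :=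
  \sum_(v : T) \sum_(w : T | (v != w) && o v w) flow e v w u.

From HB Require Import structures.
From mathcomp Require Import all_boot all_order all_algebra.
From mathcomp Require Import zify ring.
Set Implicit Arguments. Unset Strict Implicit. Unset Printing Implicit Defensive.
Import Order.TTheory GRing.Theory Num.Theory.

(* The v-w unit moves one edge per step along shortest paths, so flow
   sits at u only at step d(v,w) - d(u,w), never exceeds one unit there, and
   appears only if u lies on a geodesic from v to w; then
   d(u,v) + d(u,w) = d(v,w) <= D.  Hence T(u) is at most the number of
   unordered pairs {v,w} with d(u,v) + d(u,w) <= D.

   The sphere S_i of radius i around u has |S_i| <= Delta (Delta-1)^(i-1)
   for i >= 1 (Moore bound), so |S_i| |S_j| <= Delta^2 (Delta-1)^(D-2) whenever
   i + j <= D.  Grouping ordered pairs (v,w) by (d(u,v), d(u,w)) bounds their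
   number by that quantity times D + 1 + D^2 (a bound on the number of classes
   (i,j) with i + j <= D).  Unordered pairs are half of the ordered pairs of
   distinct vertices, and D + 1 + D^2 <= 2 D^2 for D >= 2. *)

Section Reach.
Variables (T : finType) (e : rel T).

Lemma reach0 x y : (y \in reach e 0 x) = (y == x).
Proof. by rewrite inE. Qed.

Lemma reach_step n x z y : z \in reach e n x -> e z y -> y \in reach e n.+1 x.
Proof.
by move=> zx zy; rewrite /= in_setU inE; apply/orP; right; apply/exists_inP; exists z.
Qed.

Lemma reach_mono m n x y : (m <= n)%N -> y \in reach e m x -> y \in reach e n x.
Proof.
elim: n => [|n IHn]; first by rewrite leqn0 => /eqP->.
rewrite leq_eqVlt ltnS => /orP[/eqP-> //|/IHn yx /yx].
by rewrite /= in_setU => ->.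
Qed.

Lemma reach_prepend k x p z : e x p -> z \in reach e k p -> z \in reach e k.+1 x.
Proof.
move=> xp; elim: k z => [|k IHk] z.
  by rewrite reach0 => /eqP->; apply: (reach_step (z := x)); rewrite ?reach0.
rewrite /= in_setU inE => /orP[/IHk|/exists_inP[y /IHk yx yz]].
  exact: reach_mono (leqnSn _).
exact: reach_step yx yz.
Qed.

Lemma reach_path x p : path e x p -> last x p \in reach e (size p) x.
Proof.
elim: p x => [|y p IHp] x /=; first by rewrite reach0.
by case/andP=> xy /IHp; apply: reach_prepend.
Qed.

End Reach.

Section Distance.
Variables (T : finType) (e : rel T).
Hypothesis e_conn : forall x y : T, connect e x y.

(* In a connected graph every vertex is reached within #|T| - 1 steps, along a
   shortest (hence duplicate-free) path; so the search defining dist succeeds. *)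
Lemma dist_has x y : has (fun n => y \in reach e n x) (iota 0 #|T|).
Proof.
have /connectP[p xp ->] := e_conn x y.
case/shortenP: xp => q xq uq _.
apply/hasP; exists (size q); last exact: reach_path.
by rewrite mem_iota add0n -[(size q).+1]/(size (x :: q)) -(card_uniqP uq) max_card.
Qed.

Lemma dist_lt x y : (dist e x y < #|T|)%N.
Proof. by move: (dist_has x y); rewrite has_find size_iota. Qed.

Lemma dist_reach x y : y \in reach e (dist e x y) x.
Proof. by have := nth_find 0 (dist_has x y); rewrite nth_iota ?dist_lt. Qed.

Lemma dist_min x y n : y \in reach e n x -> (dist e x y <= n)%N.
Proof.
move=> yx; rewrite leqNgt; apply/negP => ltn.
have := before_find 0 ltn; rewrite nth_iota ?yx //.
exact: ltn_trans ltn (dist_lt x y).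
Qed.

Lemma dist_eq0 x y : (dist e x y == 0%N) = (y == x).
Proof.
apply/eqP/eqP => [d0|->]; first by have := dist_reach x y; rewrite d0 reach0 => /eqP.
by apply/eqP; rewrite -leqn0 dist_min ?reach0.
Qed.

Lemma dist_pred x y r : dist e x y = r.+1 -> exists2 z, dist e x z = r & e z y.
Proof.
move=> dxy; have := dist_reach x y; rewrite dxy /= in_setU inE.
case/orP => [/dist_min|/exists_inP[z zx zy]]; first by rewrite dxy ltnn.
exists z => //; apply/eqP; rewrite eqn_leq dist_min //= leqNgt; apply/negP => ltz.
have : y \in reach e r x.
  case: r {dxy zx} ltz => // r ltz.
  by apply: reach_step zy; apply: reach_mono (dist_reach x z).
by move/dist_min; rewrite dxy ltnn.
Qed.

End Distance.

Lemma dist_diam (T : finType) (e : rel T) x y : (dist e x y <= diam e)%N.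
Proof. exact: leq_trans (leq_bigmax y) (leq_bigmax x). Qed.

Lemma card_le_sum_succ (T : finType) (A B : {set T}) (r : rel T) :
  (forall x, x \in A -> exists2 z, z \in B & r z x) ->
  (#|A| <= \sum_(z in B) #|[set x in A | r z x]|)%N.
Proof.
move=> covA.
have cardE z : #|[set x in A | r z x]| = (\sum_(x in A) r z x)%N.
  rewrite -sum1_card big_mkcond [RHS]big_mkcond.
  by apply: eq_bigr => x _; rewrite inE; case: (x \in A).
under eq_bigr do rewrite cardE.
rewrite exchange_big -sum1_card; apply: leq_sum => x /covA[z zB rzx].
by rewrite (bigD1 z) //= rzx.
Qed.

Definition sphere (T : finType) (e : rel T) (u : T) (r : nat) : {set T} :=
  [set x | dist e u x == r].

Section Spheres.
Variables (T : finType) (e : rel T).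
Hypotheses (e_sym : symmetric e) (e_conn : forall x y : T, connect e x y).
Variable Delta : nat.
Hypothesis hdeg : forall x : T, (deg e x <= Delta)%N.

Lemma sphere0 u : sphere e u 0 = [set u].
Proof. by apply/setP => x; rewrite !inE (dist_eq0 e_conn). Qed.

Lemma card_sphere1 u : (#|sphere e u 1| <= Delta)%N.
Proof.
apply: leq_trans (hdeg u); apply: subset_leq_card; apply/subsetP => x.
rewrite !inE => /eqP/(dist_pred e_conn)[z /eqP].
by rewrite (dist_eq0 e_conn) => /eqP <-.
Qed.

(* Each z at distance r+1 has a neighbour at distance r, so at most Delta - 1
   of its neighbours lie at distance r+2; every vertex at distance r+2 is
   reached this way. *)
Lemma card_sphereS u r :
  (#|sphere e u r.+2| <= #|sphere e u r.+1| * (Delta - 1))%N.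
Proof.
apply: leq_trans (card_le_sum_succ (B := sphere e u r.+1) (r := e) _) _.
  by move=> x; rewrite inE => /eqP/(dist_pred e_conn)[z dz zx]; exists z; rewrite ?inE ?dz.
rewrite -sum1_card big_distrl /=; apply: leq_sum => z.
rewrite inE mul1n => /eqP/(dist_pred e_conn)[p dp pz].
have sub : p |: [set x in sphere e u r.+2 | e z x] \subset [set y | e z y].
  by apply/subsetP => y; rewrite !inE => /orP[/eqP->|/andP[_ ->]]; rewrite // e_sym.
have := leq_trans (subset_leq_card sub) (hdeg z).
by rewrite cardsU1 !inE dp ltn_eqF ?(ltnW (ltnSn _)) //=; lia.
Qed.

Lemma card_sphere_le u r : (#|sphere e u r.+1| <= Delta * (Delta - 1) ^ r)%N.
Proof.
elim: r => [|r IHr]; first by rewrite muln1 card_sphere1.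
apply: leq_trans (card_sphereS u r) _.
by rewrite expnS mulnCA mulnC leq_mul2l IHr orbT.
Qed.

(* A form of the sphere bound valid also for r = 0. *)
Lemma card_sphere_scaled u r :
  (#|sphere e u r| * (Delta - 1) <= Delta * (Delta - 1) ^ r)%N.
Proof.
case: r => [|r]; first by rewrite sphere0 cards1 mul1n muln1 leq_subr.
by rewrite expnSr mulnA leq_mul2r card_sphere_le orbT.
Qed.

Lemma card_sphere_pair u i j n : (2 <= Delta)%N -> (i + j <= n.+2)%N ->
  (#|sphere e u i| * #|sphere e u j| <= Delta ^ 2 * (Delta - 1) ^ n)%N.
Proof.
move=> Delta_ge2 ij_le; have a_gt0 : (0 < Delta - 1)%N by rewrite subn_gt0.
set a := (Delta - 1)%N in a_gt0 *.
rewrite -(@leq_pmul2r (a ^ 2)) ?expn_gt0 ?a_gt0 //.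
have -> : (#|sphere e u i| * #|sphere e u j| * a ^ 2 =
           (#|sphere e u i| * a) * (#|sphere e u j| * a))%N by ring.
apply: leq_trans (leq_mul (card_sphere_scaled u i) (card_sphere_scaled u j)) _.
have -> : (Delta * a ^ i * (Delta * a ^ j) = Delta ^ 2 * a ^ (i + j))%N.
  by rewrite expnD mulnACA mulnn.
have -> : (Delta ^ 2 * a ^ n * a ^ 2 = Delta ^ 2 * a ^ n.+2)%N.
  by rewrite -mulnA -expnD addn2.
by rewrite leq_mul2l leq_pexp2l ?orbT // subn_gt0.
Qed.
End Spheres.

Lemma sum_by_level (T : finType) (d : T -> nat) (n : nat) (F : nat -> nat) :
  (forall v, d v <= n)%N ->
  (\sum_v F (d v) = \sum_(i < n.+1) #|[set v | d v == i]| * F i)%N.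
Proof.
move=> d_le.
have splitF v : F (d v) = (\sum_(i < n.+1) (d v == i) * F i)%N.
  rewrite (bigD1 (Ordinal (d_le v : d v < n.+1))) //= eqxx mul1n big1 ?addn0 // => i.
  by rewrite -val_eqE /= eq_sym => /negbTE->.
under eq_bigr do rewrite splitF.
rewrite exchange_big; apply: eq_bigr => i _.
rewrite -big_distrl -sum1_card [in RHS]big_mkcond /=; congr (_ * _).
by apply: eq_bigr => v _; rewrite inE; case: (_ == _).
Qed.

Lemma sum_tournament (T : finType) (o : rel T)
    (ho : forall v w : T, v != w -> o v w (+) o w v)
    (c : T -> T -> nat) (c_sym : forall v w, c v w = c w v) :
  ((\sum_v \sum_(w | (v != w) && o v w) c v w) * 2 = \sum_v \sum_(w | v != w) c v w)%N.
Proof.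
have reversed : (\sum_v \sum_(w | (v != w) && o v w) c v w =
                 \sum_v \sum_(w | (v != w) && o w v) c v w)%N.
  rewrite (exchange_big_dep xpredT) //=; apply: eq_bigr => v _.
  by apply: eq_big => [w|w _]; rewrite 1?eq_sym 1?c_sym.
rewrite muln2 -addnn {2}reversed -big_split /=; apply: eq_bigr => v _.
rewrite [X in (X + _)%N]big_mkcond [X in (_ + X)%N]big_mkcond [RHS]big_mkcond -big_split /=.
apply: eq_bigr => w _; case: eqVneq => //= /ho.
by case: (o v w); case: (o w v); rewrite //= addn0.
Qed.

Lemma sum_bool_ord_le m (b : 'I_m -> bool) : (\sum_(j < m) b j <= m)%N.
Proof.
rewrite -[leqRHS]card_ord -sum1_card; apply: leq_sum => j _; exact: leq_b1.
Qed.

Lemma lattice_triangle_le n :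
  (\sum_(i < n.+1) \sum_(j < n.+1) (i + j <= n) <= n.+1 + n * n)%N.
Proof.
rewrite big_ord_recl leq_add ?sum_bool_ord_le //.
rewrite -[X in (_ <= X * _)%N]card_ord -sum_nat_const; apply: leq_sum => i _.
rewrite big_ord_recr /=.
have -> : (bump 0 i + n <= n) = false by rewrite /bump; lia.
by rewrite addn0 sum_bool_ord_le.
Qed.

Section PairCount.
Variables (T : finType) (e : rel T).
Hypotheses (e_sym : symmetric e) (e_conn : forall x y : T, connect e x y).
Variable Delta : nat.
Hypotheses (hDelta : (2 <= Delta)%N) (hdeg : forall x : T, (deg e x <= Delta)%N).
Hypothesis hdiam : (2 <= diam e)%N.

(* Ordered pairs (v, w) whose distances to u add up to at most the diameter:
   grouping v and w by their distances i, j to u, each class has at most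
   Delta^2 (Delta - 1)^(diam - 2) pairs, and there are few classes. *)
Lemma ordered_pairs_le u :
  (\sum_v \sum_w (dist e u v + dist e u w <= diam e)
    <= Delta ^ 2 * (Delta - 1) ^ (diam e - 2) * ((diam e).+1 + diam e * diam e))%N.
Proof.
set D := diam e; set M := (Delta ^ 2 * (Delta - 1) ^ (D - 2))%N.
have dist_le v : (dist e u v <= D)%N by apply: dist_diam.
under eq_bigr do rewrite (sum_by_level (fun j => dist e u _ + j <= D) dist_le).
rewrite (sum_by_level (fun i => \sum_(j < D.+1) #|sphere e u j| * (i + j <= D))
  dist_le).
apply: leq_trans (_ : \sum_(i < D.+1) \sum_(j < D.+1) M * (i + j <= D) <= _)%N; last first.
  under eq_bigr do rewrite -big_distrr /=.
  by rewrite -big_distrr leq_mul2l lattice_triangle_le orbT.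
apply: leq_sum => i _; rewrite big_distrr; apply: leq_sum => j _ /=.
case ij_le: (i + j <= D); last by rewrite !muln0.
rewrite !muln1; apply: (card_sphere_pair e_sym e_conn hdeg u hDelta).
by rewrite -addn2 subnK.
Qed.

Lemma unordered_pairs_le (o : rel T) (ho : forall v w : T, v != w -> o v w (+) o w v) u :
  (\sum_v \sum_(w | (v != w) && o v w) (dist e u v + dist e u w <= diam e)
    <= Delta ^ 2 * (Delta - 1) ^ (diam e - 2) * diam e ^ 2)%N.
Proof.
set D := diam e; set M := (Delta ^ 2 * (Delta - 1) ^ (D - 2))%N.
rewrite -(leq_pmul2r (isT : 0 < 2)%N) sum_tournament //; last by move=> v w; rewrite addnC.
apply: leq_trans (_ : _ <= \sum_v \sum_w (dist e u v + dist e u w <= D))%N _.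
  by apply: leq_sum => v _; rewrite [leqRHS](bigID (fun w => v != w)) /= leq_addr.
apply: leq_trans (ordered_pairs_le u) _.
rewrite -/D -/M -mulnA leq_mul2l; apply/orP; right.
by move: hdiam; rewrite -/D; nia.
Qed.
End PairCount.

Local Open Scope ring_scope.

Section Flow.
Variables (T : finType) (e : rel T).

Lemma phiS v w k : phi e v w k.+1 = step e w (phi e v w k).
Proof. exact: iterS. Qed.

Lemma phi_ge0 v w k x : 0 <= phi e v w k x.
Proof.
elim: k x => [|k IHk] x; first by rewrite /phi /=; case: (x == v).
by rewrite phiS; apply: sumr_ge0 => p _; rewrite divr_ge0.
Qed.

(* A routing step never creates flow: each vertex p passes its flow in equal
   shares to its downdeg neighbours closer to w (and keeps none). *)
Lemma step_mass w (f : T -> rat) : (forall x, 0 <= f x) ->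
  \sum_x step e w f x <= \sum_x f x.
Proof.
move=> f_ge0; rewrite /step (exchange_big_dep xpredT) //=; apply: ler_sum => p _.
rewrite sumr_const.
have -> : #|[pred x | e p x && ((dist e x w).+1 == dist e p w)%N]| = downdeg e w p.
  by apply: eq_card => x; rewrite !inE.
have [->|dp_neq0] := eqVneq (downdeg e w p) 0%N; first by rewrite mulr0n f_ge0.
by rewrite -[f p / _ *+ _]mulr_natr mulfVK // pnatr_eq0.
Qed.

(* Total flow never exceeds the initial unit, so neither does flow at x. *)
Lemma phi_le1 v w k x : phi e v w k x <= 1.
Proof.
have mass : \sum_y phi e v w k y <= 1.
  elim: k => [|k IHk]; last by rewrite phiS (le_trans (step_mass _ (phi_ge0 v w k))).
  by rewrite (bigD1 v) //= eqxx big1 ?addr0 // => y /negbTE->.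
apply: le_trans mass; rewrite (bigD1 x) //= lerDl.
by apply: sumr_ge0 => y _; apply: phi_ge0.
Qed.

Lemma phi_supp (e_sym : symmetric e) v w k x : phi e v w k x != 0 ->
  ((dist e x w + k)%N == dist e v w) && (v \in reach e k x).
Proof.
elim: k x => [|k IHk] x.
  by rewrite /phi /=; have [->|] := eqVneq x v; rewrite ?eqxx ?addn0 ?inE ?eqxx.
rewrite phiS => phi_neq0.
have [p /andP[px /eqP dpx] phip] : exists2 p, e p x && ((dist e x w).+1 == dist e p w)%N
    & phi e v w k p != 0.
  apply/exists_inP; apply: contraNT phi_neq0; rewrite negb_exists_in => /forall_inP phi0.
  by apply/eqP/big1 => p /phi0; rewrite negbK => /eqP->; rewrite mul0r.
case/andP: (IHk p phip) => /eqP <- vp.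
by rewrite -dpx addSnnS eqxx (reach_prepend _ vp) // e_sym.
Qed.

(* The v-w flow through u is at most one unit, and vanishes unless u lies on
   a shortest v-w path, which forces d(u,v) + d(u,w) <= diam. *)
Lemma flow_le (e_sym : symmetric e) (e_conn : forall x y : T, connect e x y) v w u :
  flow e v w u <= (dist e u v + dist e u w <= diam e)%N%:R.
Proof.
have supp k : phi e v w k u != 0 ->
    ((dist e u w + k)%N = dist e v w) /\ (dist e u v <= k)%N.
  by case/(phi_supp e_sym)/andP => /eqP ? /(dist_min e_conn).
case: (boolP (dist e u v + dist e u w <= diam e)%N) => [_|far].
  pose k0 := (dist e v w - dist e u w)%N.
  have phi0 (k : 'I_#|T|) : (k : nat) != k0 -> phi e v w k u = 0.
    move=> k_neq; apply/eqP; apply: contraNT k_neq => /supp[dk _].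
    by rewrite /k0 -dk addKn.
  rewrite /flow; case: (ltnP k0 #|T|) => [k0_lt|k0_ge].
    by rewrite (bigD1 (Ordinal k0_lt)) //= big1 ?addr0 ?phi_le1 // => k; apply: phi0.
  by rewrite big1 // => k _; apply: phi0; rewrite neq_ltn (leq_trans (ltn_ord k) k0_ge).
rewrite /flow big1 // => k _; apply/eqP; apply: contraNT far => /supp[dk dv].
by rewrite (leq_trans _ (dist_diam e v w)) // -dk addnC leq_add2l.
Qed.
End Flow.

Unset Implicit Arguments.

Theorem mainTheorem3 (T : finType) (e : rel T)
    (e_sym : symmetric e) (e_irr : irreflexive e)
    (e_conn : forall x y : T, connect e x y)
    (Delta : nat) (hDelta : (2 <= Delta)%N)
    (hdeg : forall x : T, (deg e x <= Delta)%N)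
    (hdiam : (2 <= diam e)%N)
    (o : rel T) (ho : forall v w : T, v != w -> o v w (+) o w v)
    (u : T) :
  vflow e o u <=
    ((Delta ^ 2 * (Delta - 1) ^ (diam e - 2) * (diam e) ^ 2)%N)%:R.
Proof.
pose near v w := (dist e u v + dist e u w <= diam e)%N.
apply: (@le_trans _ _ (\sum_v \sum_(w | (v != w) && o v w) near v w)%N%:R).
  rewrite natr_sum; apply: ler_sum => v _; rewrite natr_sum; apply: ler_sum => w _.
  exact: flow_le.
by rewrite ler_nat (unordered_pairs_le e_sym e_conn hDelta hdeg hdiam ho).
Qed.
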